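(* Let $\mathbb{V}=(V,S)$ be a finite hypergraph with intersection graph $\mathbb{I}=(S,E)$, let $\mathbb{G}$ be an $E$-group compatible with $\mathbb{I}$, and let $\hat{\mathbb{V}}=(\hat V,\hat S)$ and $\pi$ be as defined in the context. Then $\pi:\hat V\to V$ is well defined and maps every hyperedge $[s,g]\in\hat S$ bijectively onto $s$. Moreover, if $N\ge3$ and $\mathbb{G}$ is $N$-acyclic over $\mathbb{I}$, then (a) the Gaifman graph of $\hat{\mathbb{V}}$ has no chordless cycle of length $n$ with $4\le n\le N$, and (b) every set of at most $N$ vertices of $\hat V$ that are pairwise adjacent in the Gaifman graph is contained in a single hyperedge of $\hat S$; i.e. every induced sub-hypergraph of $\hat{\mathbb{V}}$ on at most $N$ vertices is acyclic (chordal and conformal).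
   Context: A finite hypergraph $(V,S)$ has finite vertex set $V$ and set of hyperedges $S\subseteq\mathcal{P}(V)$. Its intersection graph has vertex set $S$ and edge set $E=\{\{s,s'\}: s\neq s',\ s\cap s'\neq\emptyset\}$, regarded as the $E$-graph $\mathbb{I}=(S,(R_e)_{e\in E})$ with $R_e=\{(s,s'),(s',s)\}$ for $e=\{s,s'\}$. An $E$-group is a group $\mathbb{G}$ with $E\subseteq\mathbb{G}$ generating it and each $e\in E$ satisfying $e\neq1$, $e^2=1$; $[e_1\cdots e_n]_{\mathbb{G}}=e_1\cdots e_n$. For an $E$-graph $(X,(R_e))$ (each $R_e$ symmetric, each vertex with at most one $R_e$-neighbour), $\pi_e$ swaps $R_e$-neighbours and fixes all other vertices, $\pi_{e_1\cdots e_n}=\pi_{e_n}\circ\cdots\circ\pi_{e_1}$; $\mathbb{G}$ is compatible with it if $[w]_{\mathbb{G}}=1$ implies $\pi_w=\mathrm{id}$. For $\alpha\subseteq E$, $s,t\in S$, $\alpha^*[\mathbb{I},s]$ is the set of $w=e_1\cdots e_n\in\alpha^*$ labelling a walk in $\mathbb{I}$ from $s$, $\alpha^*[\mathbb{I},s,t]$ those ending at $t$; $C[\mathbb{I},\alpha,s;g]=\{g[w]_{\mathbb{G}}:w\in\alpha^*[\mathbb{I},s]\}$. An $\mathbb{I}$-coset cycle of length $n\ge2$ is $(g_i,\alpha_i,s_i)_{i\in\mathbb{Z}_n}$, $\alpha_i\subsetneq E$, $s_i\in S$, with $g_{i+1}=g_i[w]_{\mathbb{G}}$ for some $w\in\alpha_i^*[\mathbb{I},s_i,s_{i+1}]$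 and $C[\mathbb{I},\alpha_i\cap\alpha_{i-1},s_i;g_i]\cap C[\mathbb{I},\alpha_i\cap\alpha_{i+1},s_{i+1};g_{i+1}]=\emptyset$; $\mathbb{G}$ is $N$-acyclic over $\mathbb{I}$ if there is no $\mathbb{I}$-coset cycle of length $2,\dots,N$. Covering: let $X=\{(v,s,g): s\in S,\ v\in s,\ g\in\mathbb{G}\}$ and let $\approx$ be the equivalence relation on $X$ generated by $(v,s,g)\approx(v,s',ge)$ for all $e=\{s,s'\}\in E$ with $v\in s\cap s'$. Put $\hat V=X/{\approx}$, $[s,g]=\{[(v,s,g)]: v\in s\}$, $\hat S=\{[s,g]: s\in S, g\in\mathbb{G}\}$, $\hat{\mathbb{V}}=(\hat V,\hat S)$ and $\pi([(v,s,g)])=v$. The Gaifman graph of a hypergraph joins two distinct vertices iff they lie in a common hyperedge; a chordless cycle of length $n$ is a sequence of $n$ distinct vertices in which consecutive ones (cyclically) are adjacent and no non-consecutive ones are adjacent. *)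

From mathcomp Require Import all_boot.
From Stdlib Require Import Relations.
Set Implicit Arguments.
Unset Strict Implicit.
Unset Printing Implicit Defensive.

Record group_law (G : Type) := GroupLaw {
  gmul : G -> G -> G;
  gone : G;
  ginv : G -> G;
  gmulA : forall x y z, gmul x (gmul y z) = gmul (gmul x y) z;
  gmul1g : forall x, gmul gone x = x;
  gmulVg : forall x, gmul (ginv x) x = gone
}.

Section Covers.
Variables (V : finType) (S : {set {set V}}).

Definition Eset : {set {set {set V}}} :=
  [set e | [exists s in S, exists s' in S,
     [&& s != s', s :&: s' != set0 & e == [set s; s']]]].

(* The other endpoint of e from t (meaningful when t \in e). *)
Definition other (e : {set {set V}}) (t : {set V}) : {set V} :=
  odflt t [pick u in e :\ t].

Definition pi_e (e : {set {set V}}) (t : {set V}) : {set V} :=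
  if t \in e then other e t else t.

Definition pi_word (w : seq {set {set V}}) (t : {set V}) : {set V} :=
  foldl (fun u e => pi_e e u) t w.

Fixpoint walk (s : {set V}) (w : seq {set {set V}}) : bool :=
  match w with
  | [::] => true
  | e :: w' => (s \in e) && walk (pi_e e s) w'
  end.

Variables (G : Type) (L : group_law G) (iota : {set {set V}} -> G).
(* iota e is the element of G corresponding to the generator e \in E. *)

Local Notation "x * y" := (gmul L x y).
Local Notation "1" := (gone L).

Definition geval (w : seq {set {set V}}) : G :=
  foldr (fun e acc => iota e * acc) 1 w.

Definition is_Egroup : Prop :=
  [/\ forall e e', e \in Eset -> e' \in Eset -> iota e = iota e' -> e = e',
      forall e, e \in Eset -> iota e <> 1,
      forall e, e \in Eset -> iota e * iota e = 1 &
      forall g : G, exists w, all (fun e => e \in Eset) w /\ g = geval w].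

Definition compatible : Prop :=
  forall w, all (fun e => e \in Eset) w -> geval w = 1 ->
    forall t, t \in S -> pi_word w t = t.

Definition coset (a : {set {set {set V}}}) (s : {set V}) (g : G) (h : G) : Prop :=
  exists w, [/\ all (fun e => e \in a) w, walk s w & h = g * geval w].

(* I-coset cycle of length n, indexed by Z_n = 'I_n. *)
Definition coset_cycle (n : nat) (gs : 'I_n -> G)
    (als : 'I_n -> {set {set {set V}}}) (ss : 'I_n -> {set V}) : Prop :=
  2 <= n /\
  forall i : 'I_n,
  [/\ als i \proper Eset,
      ss i \in S,
      (exists w, [/\ all (fun e => e \in als i) w, walk (ss i) w,
                     pi_word w (ss i) = ss (ordS i) &
                     gs (ordS i) = gs i * geval w]) &
      (forall h, coset (als i :&: als (ord_pred i)) (ss i) (gs i) h ->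
                 coset (als i :&: als (ordS i)) (ss (ordS i)) (gs (ordS i)) h ->
                 False)].

Definition N_acyclic (N : nat) : Prop :=
  forall n, 2 <= n <= N ->
  forall gs als ss, ~ @coset_cycle n gs als ss.

Definition Xel := (V * {set V} * G)%type.
Definition inX (x : Xel) : Prop := x.1.2 \in S /\ x.1.1 \in x.1.2.

Definition xstep (x y : Xel) : Prop :=
  exists s', let: (v, s, g) := x in
    [/\ [set s; s'] \in Eset, v \in s, v \in s' &
        y = (v, s', g * iota [set s; s'])].

Definition approx : relation Xel := clos_refl_sym_trans Xel xstep.

(* projection pi([(v,s,g)]) = v, on representatives *)
Definition proj (x : Xel) : V := x.1.1.

(* membership of the vertex [x] in the hyperedge [s,g] = {[(v,s,g)] : v \in s} *)
Definition in_hedge (s : {set V}) (g : G) (x : Xel) : Prop :=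
  exists v, v \in s /\ approx x (v, s, g).

Definition gadj (x y : Xel) : Prop :=
  ~ approx x y /\ exists s g, s \in S /\ in_hedge s g x /\ in_hedge s g y.

Definition chordless_cycle (n : nat) (c : 'I_n -> Xel) : Prop :=
  [/\ forall i, inX (c i),
      forall i j, i != j -> ~ approx (c i) (c j),
      forall i, gadj (c i) (c (ordS i)) &
      forall i j, i != j -> j != ordS i -> i != ordS j -> ~ gadj (c i) (c j)].

End Covers.

(* Two triples (v, s, g) and (v, s', g') are identified by the covering
   equivalence exactly when some walk w of the intersection graph leads from
   s to s' through hyperedges that all contain v, with g' = g [w]; this makes
   pi well defined and injective on every [s, g].  For a compatible group the
   endpoint of a walk is determined by its value in G, so if consecutive
   "links" of this kind around a cycle of hyperedges failed to meet, they would
   form an I-coset cycle; N-acyclicity thus forces them to meet.  For two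
   hyperedges this merges links over vertex sets B and C into a link over
   B :|: C.  A chordless cycle c_0 ... c_(n-1), 4 <= n <= N, gives a cycle of
   hyperedges through c_i and c_(i+1) whose meeting point is a hyperedge
   containing c_i and c_(i+2), a chord.  For a clique, removing each of three
   of its vertices leaves (by induction) three hyperedges that pairwise share
   vertices; the meeting point of this 3-cycle is a hyperedge containing the
   whole clique, so only 3-acyclicity is needed there. *)

From mathcomp Require Import all_boot.
From Stdlib Require Import Relations Classical IndefiniteDescription.

Set Implicit Arguments.
Unset Strict Implicit.
Unset Printing Implicit Defensive.

Lemma sub_all_mem (T : finType) (A B : {set T}) s :
  A \subset B -> all (mem A) s -> all (mem B) s.
Proof. by rewrite -!subset_all => AB /subset_trans; apply. Qed.

Lemma iter_ordS_neq n (j : 'I_n) k : 0 < k < n -> iter k (@ordS n) j != j.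
Proof.
case/andP=> k_gt0 k_lt_n.
have val_iter : val (iter k (@ordS n) j) = (j + k) %% n.
  elim: (k) => [|m IHm] /=; first by rewrite addn0 modn_small.
  by rewrite IHm -addn1 modnDml addn1 addnS.
apply/eqP => /(congr1 val); rewrite val_iter -[X in _ = X](modn_small (ltn_ord j)).
by move/eqP; rewrite -{2}[val j]addn0 eqn_modDl mod0n modn_small // eqn0Ngt k_gt0.
Qed.

Lemma ord3_cases (i j : 'I_3) : [|| j == i, j == ordS i | j == ordS (ordS i)].
Proof. by case: i j => [[|[|[|//]]] ?] [[|[|[|//]]] ?]. Qed.

Lemma ord3_pred (i : 'I_3) : ord_pred i = ordS (ordS i).
Proof. by case: i => [[|[|[|//]]] ?]; apply: val_inj. Qed.

Lemma ordS3 (i : 'I_3) : ordS (ordS (ordS i)) = i.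
Proof. by case: i => [[|[|[|//]]] ?]; apply: val_inj. Qed.

Section GroupLaw.
Variables (G : Type) (L : group_law G).
Local Notation "x * y" := (gmul L x y).
Local Notation "1" := (gone L).

Lemma gmulgV x : x * ginv L x = 1.
Proof.
rewrite -[x * _](gmul1g L) -(gmulVg L (ginv L x)) -gmulA.
by rewrite (gmulA L (ginv L x)) gmulVg gmul1g.
Qed.

Lemma gmulg1 x : x * 1 = x.
Proof. by rewrite -(gmulVg L x) gmulA gmulgV gmul1g. Qed.

Lemma gmulI g : injective (gmul L g).
Proof.
move=> x y gxy.
by rewrite -[x](gmul1g L) -(gmulVg L g) -gmulA gxy gmulA gmulVg gmul1g.
Qed.

End GroupLaw.

Section Cover.
Variables (V : finType) (S : {set {set V}}).
Variables (G : Type) (L : group_law G) (iota : {set {set V}} -> G).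
Local Notation "x * y" := (gmul L x y).
Local Notation "1" := (gone L).
Local Notation Eset := (Eset S).
Local Notation geval := (geval L iota).
Local Notation approx := (approx S L iota).
Local Notation in_hedge := (in_hedge S L iota).
Implicit Types (a b : {set {set {set V}}}) (B C s t : {set V}) (e : {set {set V}}).
Implicit Types (w u : seq {set {set V}}) (g h : G) (x y : Xel V G).

Lemma EsetP e :
  reflect (exists s t, [/\ s \in S, t \in S, s != t, s :&: t != set0 & e = [set s; t]])
          (e \in Eset).
Proof.
rewrite inE; apply: (iffP existsP) => [[s /andP [sS /existsP [t]]] | [s [t [sS tS st meet ->]]]].
  by case/andP=> tS /and3P [st meet /eqP ->]; exists s, t.
by exists s; rewrite sS; apply/existsP; exists t; rewrite tS st meet eqxx.
Qed.

Lemma Eset_sub e : e \in Eset -> {subset e <= S}.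
Proof. by case/EsetP=> s [t [sS tS _ _ ->]] u /set2P [] ->. Qed.

Lemma pi_e2 s t : s != t -> pi_e [set s; t] s = t.
Proof.
move=> st; rewrite /pi_e set21 /other; case: pickP => [u | /(_ t)]; rewrite !inE.
  by case/andP=> us /orP [/eqP u_s | /eqP //]; rewrite u_s eqxx in us.
by rewrite eqxx orbT andbT eq_sym st.
Qed.

Lemma Eset_pi_e e t : e \in Eset -> t \in e -> t != pi_e e t /\ e = [set t; pi_e e t].
Proof.
case/EsetP=> r [r' [_ _ rr' _ ->]] /set2P [] ->; first by rewrite pi_e2.
by rewrite setUC pi_e2 1?eq_sym.
Qed.

Lemma pi_e_in e t : e \in Eset -> t \in e -> pi_e e t \in e.
Proof. by move=> eE te; have [_ {2}->] := Eset_pi_e eE te; rewrite set22. Qed.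

Lemma pi_eK e t : e \in Eset -> pi_e e (pi_e e t) = t.
Proof.
move=> eE; case te: (t \in e); last by rewrite /pi_e te te.
have [tu {1}->] := Eset_pi_e eE te.
by rewrite setUC pi_e2 // eq_sym.
Qed.

Lemma pi_word_cat w u t : pi_word (w ++ u) t = pi_word u (pi_word w t).
Proof. exact: foldl_cat. Qed.

Lemma pi_word_revK w t : all (mem Eset) w -> pi_word (rev w) (pi_word w t) = t.
Proof.
elim: w t => [//|e w IHw] t /andP [eE wE].
by rewrite rev_cons -cats1 pi_word_cat IHw //= pi_eK.
Qed.

Lemma pi_word_Krev w t : all (mem Eset) w -> pi_word w (pi_word (rev w) t) = t.
Proof. by move=> wE; rewrite -{1}(revK w) pi_word_revK // all_rev. Qed.

Lemma walk_cat s w u : walk s (w ++ u) = walk s w && walk (pi_word w s) u.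
Proof. by elim: w s => [//|e w IHw] s /=; rewrite IHw andbA. Qed.

Lemma walk_rev s w : all (mem Eset) w -> walk s w -> walk (pi_word w s) (rev w).
Proof.
elim: w s => [//|e w IHw] s /andP [eE wE] /andP [se ws].
by rewrite rev_cons -cats1 walk_cat IHw //= pi_word_revK // pi_e_in.
Qed.

Lemma walk_in_S s w : s \in S -> all (mem Eset) w -> walk s w -> pi_word w s \in S.
Proof.
elim: w s => [//|e w IHw] s sS /andP [eE wE] /andP [se ws].
by apply: IHw => //; apply: Eset_sub eE _ (pi_e_in eE se).
Qed.

Lemma geval_cat w u : geval (w ++ u) = geval w * geval u.
Proof. by elim: w => [|e w IHw] /=; rewrite ?gmul1g // IHw gmulA. Qed.

Definition edges_over B : {set {set {set V}}} :=
  [set e in Eset | [forall t in e, B \subset t]].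

Lemma edges_overP B e :
  reflect (e \in Eset /\ forall t, t \in e -> B \subset t) (e \in edges_over B).
Proof.
apply: (iffP setIdP) => -[eE eB]; split=> //.
  by move=> t te; move/forallP/(_ t): eB; rewrite te.
by apply/forall_inP.
Qed.

Lemma edges_over_Eset B : edges_over B \subset Eset.
Proof. by apply/subsetP => e /edges_overP []. Qed.

Lemma edges_overU B C : edges_over (B :|: C) = edges_over B :&: edges_over C.
Proof.
apply/setP => e; rewrite in_setI.
apply/edges_overP/andP => [[eE eBC] | [/edges_overP [eE eB] /edges_overP [_ eC]]].
  by split; apply/edges_overP; split=> // t /eBC; rewrite subUset => /andP [].
by split=> // t te; rewrite subUset eB ?eC.
Qed.

Lemma edges_over_le B C : B \subset C -> edges_over C \subset edges_over B.
Proof.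
move=> BC; apply/subsetP => e /edges_overP [eE eC].
by apply/edges_overP; split=> // t /eC; apply: subset_trans.
Qed.

Lemma in_hedge_self x : inX S x -> in_hedge x.1.2 x.2 x.
Proof. by case: x => [[v s] g] [_ vs]; exists v; split=> //; apply: rst_refl. Qed.

Hypothesis iota_invol : forall e, e \in Eset -> iota e * iota e = 1.

Lemma geval_revV w : all (mem Eset) w -> geval w * geval (rev w) = 1.
Proof.
elim: w => [|e w IHw] /=; first by rewrite gmul1g.
case/andP=> eE wE; rewrite rev_cons -cats1 geval_cat /= gmulg1.
by rewrite -gmulA (gmulA L (geval w)) IHw // gmul1g iota_invol.
Qed.

(* Unlike [coset], [link] records where the walk ends; [pi_word_geval] below
   shows that under compatibility this endpoint is determined by [h]. *)
Definition link a s g t h : Prop :=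
  exists w, [/\ all (mem a) w, walk s w, pi_word w s = t & h = g * geval w].

Lemma link_refl a s g : link a s g s g.
Proof. by exists [::]; rewrite /= gmulg1. Qed.

Lemma link_trans a s g t h r k : link a s g t h -> link a t h r k -> link a s g r k.
Proof.
case=> w [wa ws <- ->] [u [ua ut <- ->]]; exists (w ++ u).
by rewrite all_cat wa ua walk_cat ws ut pi_word_cat geval_cat gmulA.
Qed.

Lemma link_sym a s g t h : a \subset Eset -> link a s g t h -> link a t h s g.
Proof.
move=> aE [w [wa ws <- ->]].
have wE := sub_all_mem aE wa.
exists (rev w); rewrite all_rev wa walk_rev // pi_word_revK //.
by rewrite -gmulA geval_revV // gmulg1.
Qed.

Lemma link_sub a b s g t h : a \subset b -> link a s g t h -> link b s g t h.
Proof. by move=> ab [w [wa *]]; exists w; split=> //; apply: sub_all_mem ab wa. Qed.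

Lemma link_in_S a s g t h : a \subset Eset -> s \in S -> link a s g t h -> t \in S.
Proof.
by move=> aE sS [w [wa ws <- _]]; apply: walk_in_S (sub_all_mem aE wa) ws.
Qed.

Lemma link_over_subset B s g t h : link (edges_over B) s g t h -> B \subset s -> B \subset t.
Proof.
case=> w [+ + <- _]; elim: w s => [//|e w IHw] s /andP [eB wB] /andP [se ws] Bs.
by apply: IHw => //; case/edges_overP: eB => eE; apply; apply: pi_e_in.
Qed.

Lemma set2_Eset_neq s t : [set s; t] \in Eset -> s != t.
Proof.
case/EsetP=> r [r' [_ _ rr' _ st]]; apply: contraNneq rr' => t_s.
have : r \in [set s; t] /\ r' \in [set s; t] by rewrite st set21 set22.
by rewrite t_s setUid => -[/set1P -> /set1P ->].
Qed.

Lemma xstep_link x y :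
  xstep S L iota x y -> proj x = proj y /\
    link (edges_over [set proj x]) x.1.2 x.2 y.1.2 y.2.
Proof.
case: x => [[v s] g] [t [eE vs vt ->]]; split=> //.
exists [:: [set s; t]]; split=> /=.
- by rewrite andbT; apply/edges_overP; split=> // r /set2P [] ->; rewrite sub1set.
- by rewrite set21.
- by rewrite pi_e2 // set2_Eset_neq.
- by rewrite gmulg1.
Qed.

Lemma approxE x y :
  approx x y <-> proj x = proj y /\
    link (edges_over [set proj x]) x.1.2 x.2 y.1.2 y.2.
Proof.
split.
  elim=> {x y} [x y /xstep_link // | x | x y _ [xy lxy] | x y z _ [xy lxy] _ [yz lyz]].
  - by split=> //; apply: link_refl.
  - by rewrite -xy; split=> //; apply: link_sym (edges_over_Eset _) _.
  - by rewrite -xy in lyz; split; [rewrite xy | apply: link_trans lxy lyz].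
case: x y => [[v s] g] [[v' t] h]; rewrite /proj /= => -[<- [w [+ + <- ->]]].
elim: w s g => [|e w IHw] s g /=; first by rewrite gmulg1 => *; apply: rst_refl.
case/andP=> ev wv /andP [se ws]; rewrite gmulA.
apply: rst_trans (IHw _ _ wv ws); apply: rst_step; exists (pi_e e s).
have /edges_overP [eE sub_e] := ev; have [_ e_def] := Eset_pi_e eE se.
by rewrite -e_def; split; rewrite // -sub1set sub_e // pi_e_in.
Qed.

Lemma in_hedgeP s g x : in_hedge s g x <-> proj x \in s /\ approx x (proj x, s, g).
Proof.
split=> [[v [vs xv]] | [xs xx]]; last by exists (proj x).
by have [-> _] := proj1 (approxE _ _) xv.
Qed.

Lemma in_hedge_linkE s g t h x : in_hedge s g x ->
  in_hedge t h x <-> link (edges_over [set proj x]) s g t h.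
Proof.
case/in_hedgeP=> xs xv; split=> [/in_hedgeP [_ xv'] | lnk].
  by case/approxE: (rst_trans _ _ _ _ _ (rst_sym _ _ _ _ xv) xv').
apply/in_hedgeP; split; first by rewrite -sub1set (link_over_subset lnk) ?sub1set.
by apply: rst_trans xv _; apply/approxE.
Qed.

Lemma in_hedge_move B s g t h x : in_hedge s g x -> proj x \in B ->
  link (edges_over B) s g t h -> in_hedge t h x.
Proof.
move=> xsg xB lnk; apply/(in_hedge_linkE _ _ xsg); apply: link_sub lnk.
by apply: edges_over_le; rewrite sub1set.
Qed.

Hypothesis compat : compatible S L iota.

Lemma pi_word_geval s w u : s \in S -> all (mem Eset) w -> all (mem Eset) u ->
  geval w = geval u -> pi_word w s = pi_word u s.
Proof.
move=> sS wE uE wu.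
have back : pi_word (w ++ rev u) s = s.
  apply: compat => //; first by rewrite all_cat wE all_rev.
  by rewrite geval_cat wu geval_revV.
by rewrite -[LHS](pi_word_Krev _ uE) -[pi_word (rev u) _]pi_word_cat back.
Qed.

Variable N : nat.
Hypothesis acyclic : N_acyclic S L iota N.

Lemma short_cycle_meets n (ss : 'I_n -> {set V}) (gs : 'I_n -> G)
    (als : 'I_n -> {set {set {set V}}}) :
  2 <= n <= N -> (forall i, ss i \in S) -> (forall i, als i \proper Eset) ->
  (forall i, link (als i) (ss i) (gs i) (ss (ordS i)) (gs (ordS i))) ->
  exists i t h, link (als i :&: als (ord_pred i)) (ss i) (gs i) t h /\
                link (als i :&: als (ordS i)) (ss (ordS i)) (gs (ordS i)) t h.
Proof.
move=> n_range ssS alsE lnk; apply: NNPP => no_meet.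
apply: (acyclic n_range (gs := gs) (als := als) (ss := ss)); split; first by case/andP: n_range.
move=> i; split=> //; first exact: lnk.
move=> h [u [uA us ->]] [u' [u'A u's hE]]; apply: no_meet.
have [w [wA ws wt gw]] := lnk i.
have alsIE j k : als j :&: als k \subset Eset.
  exact: subset_trans (subsetIl _ _) (proper_sub (alsE j)).
exists i, (pi_word u (ss i)), (gs i * geval u); split; [by exists u | exists u'; split=> //].
rewrite -wt -pi_word_cat; apply/esym/pi_word_geval => //.
- exact: sub_all_mem (alsIE _ _) uA.
- by rewrite all_cat (sub_all_mem (proper_sub (alsE i)) wA) (sub_all_mem (alsIE _ _) u'A).
- by apply: (@gmulI _ L (gs i)); rewrite geval_cat gmulA -gw hE.
Qed.

Lemma link_meet a b s g t h : 2 <= N -> s \in S -> a \subset Eset -> b \subset Eset ->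
  link a s g t h -> link b s g t h -> link (a :&: b) s g t h.
Proof.
move=> N2 sS aE bE la lb.
have [a_full | a_proper] := eqVneq a Eset; first by rewrite a_full (setIidPr bE).
have [b_full | b_proper] := eqVneq b Eset; first by rewrite b_full (setIidPl aE).
pose ss (i : 'I_2) := if val i == 0 then s else t.
pose gs (i : 'I_2) := if val i == 0 then g else h.
pose als (i : 'I_2) := if val i == 0 then a else b.
have abE : a :&: b \subset Eset := subset_trans (subsetIl _ _) aE.
have [] := @short_cycle_meets 2 ss gs als.
- by rewrite leqnn.
- by case=> [[|[|//]] ?]; [ | apply: link_in_S la].
- by case=> [[|[|//]] ?]; rewrite properEneq ?a_proper ?b_proper.
- by case=> [[|[|//]] ?]; [ | apply: link_sym].
case=> [[|[|//]] ?] [r [k []]]; rewrite /ss /gs /als /= => l1 l2.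
  exact: link_trans l1 (link_sym abE l2).
by rewrite setIC in l1 l2; apply: link_trans l2 (link_sym abE l1).
Qed.

Lemma link_overU B C s g t h : 2 <= N -> s \in S ->
  link (edges_over B) s g t h -> link (edges_over C) s g t h ->
  link (edges_over (B :|: C)) s g t h.
Proof. by move=> N2 sS lB lC; rewrite edges_overU; apply: link_meet; rewrite ?edges_over_Eset. Qed.

Lemma link_over_points B s g t h : 2 <= N -> s \in S -> B != set0 ->
  (forall v, v \in B -> link (edges_over [set v]) s g t h) ->
  link (edges_over B) s g t h.
Proof.
move=> N2 sS /set0Pn [v0 v0B] lv.
suff lB l : all (mem B) l -> link (edges_over (v0 |: [set:: l])) s g t h.
  have -> : B = v0 |: [set:: enum B] by rewrite set_enum; apply/esym/setUidPr; rewrite sub1set.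
  by apply: lB; apply/allP => v; rewrite mem_enum.
elim: l => [_ | v l IHl /andP [vB lB]]; first by rewrite set_nil setU0; apply: lv.
by rewrite set_cons setUCA; apply: link_overU; [ | | apply: lv | apply: IHl].
Qed.

Lemma no_chordless_cycle n (c : 'I_n -> Xel V G) : 4 <= n <= N ->
  ~ chordless_cycle S L iota c.
Proof.
case/andP=> n4 nN [_ c_inj c_adj c_chordless].
have skip2 j s g : s \in S -> in_hedge s g (c j) -> ~ in_hedge s g (c (ordS (ordS j))).
  have j_j2 : j != ordS (ordS j) by rewrite eq_sym (@iter_ordS_neq _ _ 2) // (leq_trans _ n4).
  move=> sS cj cj2; apply: (c_chordless j (ordS (ordS j))) => //.
  - by rewrite (@iter_ordS_neq _ _ 1) // (leq_trans _ n4).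
  - by rewrite eq_sym (@iter_ordS_neq _ _ 3).
  - by split; [apply: c_inj | exists s, g].
have edge_hedge i : exists p : {set V} * G,
    [/\ p.1 \in S, in_hedge p.1 p.2 (c i) & in_hedge p.1 p.2 (c (ordS i))].
  by have [_ [s [g [sS [ci ci']]]]] := c_adj i; exists (s, g).
have [H HP] := functional_choice _ edge_hedge.
pose als i := edges_over [set proj (c (ordS i))].
have lnk i : link (als i) (H i).1 (H i).2 (H (ordS i)).1 (H (ordS i)).2.
  by have [_ _ ci'] := HP i; have [_ ci'' _] := HP (ordS i); apply/(in_hedge_linkE _ _ ci').
have alsE i : als i \proper Eset.
  rewrite properEneq edges_over_Eset andbT; apply/eqP => full; set j := ordS i.
  have [_ cj _] := HP j; have [j'S _ cj2] := HP (ordS j).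
  apply: (skip2 j _ _ j'S _ cj2); apply: (in_hedge_move cj (set11 _)).
  by rewrite -/(als i) full; apply: link_sub (lnk j); apply: edges_over_Eset.
have n_range : 2 <= n <= N by rewrite nN andbT (leq_trans _ n4).
have HS i : (H i).1 \in S by case: (HP i).
have [i [t [h [l1 l2]]]] := short_cycle_meets n_range HS alsE lnk.
have [_ ci _] := HP i; have [_ _ ci2] := HP (ordS i).
rewrite /als -edges_overU ord_predK in l1; rewrite /als -edges_overU in l2.
apply: (skip2 i t h).
- exact: link_in_S (edges_over_Eset _) (HS i) l1.
- by apply: in_hedge_move ci _ l1; rewrite !inE eqxx orbT.
- by apply: in_hedge_move ci2 _ l2; rewrite !inE eqxx orbT.
Qed.

Lemma hedge_helly3 (I : finType) (c : I -> Xel V G) (H : 'I_3 -> {set V} * G)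
    (Y : 'I_3 -> {set I}) :
  3 <= N -> (forall i, (H i).1 \in S) -> (forall i, Y i != set0) ->
  (forall i k, k \in Y i ->
     in_hedge (H i).1 (H i).2 (c k) /\ in_hedge (H (ordS i)).1 (H (ordS i)).2 (c k)) ->
  exists t h, t \in S /\ forall i k, k \in Y i -> in_hedge t h (c k).
Proof.
move=> N3 HS Y0 YH; have N2 : 2 <= N := ltnW N3.
pose B i := [set proj (c k) | k in Y i].
have lnk i : link (edges_over (B i)) (H i).1 (H i).2 (H (ordS i)).1 (H (ordS i)).2.
  apply: link_over_points => //; first by rewrite imset_eq0.
  by move=> _ /imsetP [k kY ->]; have [ck ck'] := YH i k kY; apply/(in_hedge_linkE _ _ ck).
case: (boolP [exists i, edges_over (B i) == Eset]) => [/existsP [i /eqP full] | /existsPn proper].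
  exists (H (ordS (ordS i))).1, (H (ordS (ordS i))).2; split=> // j k kY.
  case/or3P: (ord3_cases i j) => /eqP ->{j} in kY *; have [ck ck'] := YH _ k kY => //.
  apply: (@in_hedge_move (B i)) ck' (imset_f _ kY) _; rewrite full.
  exact: link_sub (edges_over_Eset _) (lnk _).
have alsE i : edges_over (B i) \proper Eset.
  by rewrite properEneq edges_over_Eset andbT; apply: proper.
have [i [t [h [l1 l2]]]] := short_cycle_meets (n := 3) N3 HS alsE lnk.
rewrite -edges_overU ord3_pred in l1; rewrite -edges_overU in l2.
exists t, h; split; first exact: link_in_S (edges_over_Eset _) (HS i) l1.
move=> j k kY; have kB : proj (c k) \in B j := imset_f _ kY.
case/or3P: (ord3_cases i j) => /eqP ->{j} in kY kB *; have [ck ck'] := YH _ k kY.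
- by apply: in_hedge_move ck _ l1; rewrite inE kB.
- by apply: in_hedge_move ck _ l2; rewrite inE kB orbT.
- by rewrite ordS3 in ck'; apply: in_hedge_move ck' _ l1; rewrite inE kB orbT.
Qed.

Lemma clique_in_hedge (I : finType) (c : I -> Xel V G) : 3 <= N ->
  (forall k l, exists s g, [/\ s \in S, in_hedge s g (c k) & in_hedge s g (c l)]) ->
  forall A : {set I}, A != set0 ->
  exists s g, s \in S /\ forall k, k \in A -> in_hedge s g (c k).
Proof.
move=> N3 pairs A; elim: {A}_.+1 {-2}A (ltnSn #|A|) => // m IHm A Am A0.
have [a aA] := set0Pn _ A0.
case: (boolP [exists b, A \subset [set a; b]]) => [/existsP [b Aab] | /existsPn no_pair].
  have [s [g [sS ca cb]]] := pairs a b.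
  by exists s, g; split=> // k /(subsetP Aab) /set2P [] ->.
have [b bA] := subsetPn (no_pair a); rewrite setUid inE => ba.
have [d dA] := subsetPn (no_pair b); rewrite !inE negb_or => /andP [da db].
have [ab ad bd] : [/\ a != b, a != d & b != d] by split; rewrite eq_sym.
pose av (i : 'I_3) := nth a [:: a; b; d] i.
have hedge_of i : exists p : {set V} * G,
    p.1 \in S /\ forall k, k \in A :\ av i -> in_hedge p.1 p.2 (c k).
  have [||s [g [sS cA]]] := IHm (A :\ av i); last by exists (s, g).
  - have : av i \in A by case: i => [[|[|[|//]]] ?].
    by move/properD1/proper_card/leq_trans; apply.
  - apply/set0Pn; exists (av (ordS i)).
    by case: i => [[|[|[|//]]] ?]; rewrite /av !inE /= ?ba ?db ?ad ?aA ?bA ?dA.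
have [H HP] := functional_choice _ hedge_of.
pose Y i := A :\ av i :\ av (ordS i).
have Y_cover k : k \in A -> exists i, k \in Y i.
  move=> kA; have [-> | ka] := eqVneq k a.
    by exists (@Ordinal 3 1 isT); rewrite !inE ab ad aA.
  have [-> | kb] := eqVneq k b; first by exists (@Ordinal 3 2 isT); rewrite !inE ba bd bA.
  by exists (@Ordinal 3 0 isT); rewrite !inE ka kb kA.
have [t [h [tS cY]]] : exists t h, t \in S /\ forall i k, k \in Y i -> in_hedge t h (c k).
  apply: (@hedge_helly3 _ c H Y) => // [i | i | i k].
  - by case: (HP i).
  - apply/set0Pn; exists (av (ordS (ordS i))).
    by case: i => [[|[|[|//]]] ?]; rewrite /av !inE /= ?ab ?ad ?bd ?ba ?da ?db ?aA ?bA ?dA.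
  - by rewrite !inE => /and3P [k1 k2 kA]; split; apply: (HP _).2; rewrite !inE ?k1 ?k2 kA.
by exists t, h; split=> // k /Y_cover [i /cY].
Qed.

End Cover.

Theorem mainTheorem12 (V : finType) (S : {set {set V}}) (G : Type)
    (L : group_law G) (iota : {set {set V}} -> G)
    (HEgrp : is_Egroup S L iota) (Hcomp : compatible S L iota) :
  (* pi is well defined on classes *)
  (forall x y : Xel V G, inX S x -> approx S L iota x y -> proj x = proj y) /\
  (* pi maps every hyperedge [s,g] bijectively onto s *)
  (forall (s : {set V}) (g : G), s \in S ->
     (forall x, in_hedge S L iota s g x -> proj x \in s) /\
     (forall v, v \in s -> exists x, in_hedge S L iota s g x /\ proj x = v) /\
     (forall x y, in_hedge S L iota s g x -> in_hedge S L iota s g y ->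
        proj x = proj y -> approx S L iota x y)) /\
  (forall N : nat, 3 <= N -> N_acyclic S L iota N ->
     (* (a) no chordless cycles of length 4..N *)
     (forall n (c : 'I_n -> Xel V G), 4 <= n <= N ->
        ~ chordless_cycle S L iota c) /\
     (* (b) every nonempty clique of size <= N lies in one hyperedge *)
     (forall m (c : 'I_m -> Xel V G), 0 < m <= N ->
        (forall i, inX S (c i)) ->
        (forall i j, i != j -> gadj S L iota (c i) (c j)) ->
        exists s g, s \in S /\ forall i, in_hedge S L iota s g (c i))).
Proof.
have [_ _ iota_invol _] := HEgrp.
split; [|split].
- by move=> x y _ /(approxE iota_invol) [].
- move=> s g sS; split; [|split].
  + by move=> x /(in_hedgeP iota_invol) [].
  + move=> v vs; exists (v, s, g); split=> //.
    exact: (@in_hedge_self _ S _ L iota (v, s, g)).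
  + move=> x y /(in_hedgeP iota_invol) [_ xv] /(in_hedgeP iota_invol) [_ yv] xy.
    by rewrite -xy in yv; apply: rst_trans xv (rst_sym _ _ _ _ yv).
move=> N N3 acyclic; split=> [n c | m c /andP [m_gt0 _] cX c_clique].
  exact: (no_chordless_cycle iota_invol Hcomp acyclic).
have pairs i j : exists s g,
    [/\ s \in S, in_hedge S L iota s g (c i) & in_hedge S L iota s g (c j)].
  have [<- | ij] := eqVneq i j.
    by exists (c i).1.2, (c i).2; have [sS _] := cX i; split=> //; apply: in_hedge_self.
  by have [_ [s [g [sS [ci cj]]]]] := c_clique i j ij; exists s, g.
have [|s [g [sS cs]]] :=
  clique_in_hedge iota_invol Hcomp acyclic N3 pairs (A := [set: 'I_m]).
  by apply/set0Pn; exists (Ordinal m_gt0).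
by exists s, g; split=> // i; apply: cs.
Qed.
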